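(* Let $\mu>0$, $\sigma\ge0$, and let $\mathbb{F}^{=}_{\mu,\sigma}$ be the class of distributions of nonnegative random variables with mean $\mu$ and standard deviation exactly $\sigma$. Then for every probability distribution $A$ over nonnegative prices, \[\sup_{F\in\mathbb{F}_{\mu,\sigma}}\frac{\mathrm{OPT}(F)}{\mathrm{REV}(A;F)}=\sup_{F\in\mathbb{F}^{=}_{\mu,\sigma}}\frac{\mathrm{OPT}(F)}{\mathrm{REV}(A;F)},\] and consequently \[\inf_A\sup_{F\in\mathbb{F}_{\mu,\sigma}}\frac{\mathrm{OPT}(F)}{\mathrm{REV}(A;F)}=\inf_A\sup_{F\in\mathbb{F}^{=}_{\mu,\sigma}}\frac{\mathrm{OPT}(F)}{\mathrm{REV}(A;F)}.\]
   Context: A nonnegative real random variable is $(\mu,\sigma)$-distributed if its expectation is $\mu$ and its standard deviation is at most $\sigma$; $\mathbb{F}_{\mu,\sigma}$ is the class of such distributions. Single item, single buyer with value $X\sim F$; a (possibly randomized) truthful mechanism is identified with a distribution $A$ over prices $p\ge0$. $\mathrm{REV}(p;F)=p\Pr[X\ge p]$, $\mathrm{REV}(A;F)=\mathbb{E}_{p\sim A}[\mathrm{REV}(p;F)]$, $\mathrm{OPT}(F)=\sup_{p\ge0}\mathrm{REV}(p;F)$. Ratios with zero denominator are interpreted as $+\infty$. *)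

From mathcomp Require Import all_boot all_order all_algebra.
From mathcomp Require Import all_classical all_reals all_analysis.
Set Implicit Arguments. Unset Strict Implicit. Unset Printing Implicit Defensive.
Import Order.TTheory GRing.Theory Num.Theory.
Local Open Scope classical_set_scope.
Local Open Scope ring_scope.
Local Open Scope ereal_scope.

Notation rdist R := (probability (measurableTypeR R) R).

Section Defs.
Variable R : realType.

Definition nonneg_dist (F : rdist R) : Prop := F [set x : R | (x < 0)%R] = 0.

Definition has_mean (F : rdist R) (mu : R) : Prop :=
  \int[F]_x (x%:E) = mu%:E.

Definition var_about (F : rdist R) (mu : R) : \bar R :=
  \int[F]_x (((x - mu) ^+ 2)%R%:E).

Definition F_le (mu sigma : R) : set (rdist R) :=
  [set F | nonneg_dist F /\ has_mean F mu /\ var_about F mu <= (sigma ^+ 2)%:E].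

Definition F_eq (mu sigma : R) : set (rdist R) :=
  [set F | nonneg_dist F /\ has_mean F mu /\ var_about F mu = (sigma ^+ 2)%:E].

Definition REVp (p : R) (F : rdist R) : \bar R :=
  p%:E * F [set x : R | (p <= x)%R].

Definition REV (A : rdist R) (F : rdist R) : \bar R :=
  \int[A]_p REVp p F.

Definition OPT (F : rdist R) : \bar R :=
  ereal_sup [set REVp p F | p in [set p : R | (0 <= p)%R]].

Definition ratio (a b : \bar R) : \bar R := if b == 0 then +oo else a * b^-1.

Definition worst_ratio (C : set (rdist R)) (A : rdist R) : \bar R :=
  ereal_sup [set ratio (OPT F) (REV A F) | F in C].

Definition minimax_ratio (C : set (rdist R)) : \bar R :=
  ereal_inf [set worst_ratio C A | A in [set A : rdist R | nonneg_dist A]].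

End Defs.

(* A distribution F with mean mu and variance v <= sigma^2 is moved into the
   class with variance exactly sigma^2 by mixing in, with a small weight eps,
   a two-point distribution on {0, mu (1 + t)} of mean mu, t being tuned so
   that the variance of the mixture is sigma^2.  Every posted price keeps at
   least a (1 - eps) fraction of its revenue against F, whereas by Markov's
   inequality the added component contributes at most eps mu to REV(A; .).
   Hence OPT/REV of the mixture is at least
   (1 - eps) OPT(F) / ((1 - eps) REV(A; F) + eps mu), which tends to
   OPT(F) / REV(A; F) as eps -> 0. *)

From Pilot Require Import Defs.
From HB Require Import structures.
From mathcomp Require Import all_boot all_order all_algebra.
From mathcomp Require Import all_classical all_reals all_analysis.
From mathcomp Require Import measurable_realfun.
From mathcomp Require Import ring lra.
Import Order.TTheory GRing.Theory Num.Theory.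
Set Implicit Arguments. Unset Strict Implicit. Unset Printing Implicit Defensive.
Local Open Scope classical_set_scope.
Local Open Scope ring_scope.
(* [ratio] alone would refer to the record [ratio] of mathcomp's [fraction]. *)
Local Notation ratio := Pilot.Defs.ratio.

Section mixture.
Local Open Scope ereal_scope.
Context d (T : measurableType d) (R : realType).
Variables (l : {i01 R}) (P Q : probability T R).

Definition mixture : set T -> \bar R :=
  measure_add (mscale (1 - l%:num)%:nng%R P) (mscale l%:num%:nng%R Q).

HB.instance Definition _ := Measure.on mixture.

Lemma mixtureE U : mixture U = (1 - l%:num)%:E * P U + l%:num%:E * Q U.
Proof. by rewrite /mixture measure_addE. Qed.

Let mixture_setT : mixture setT = 1.
Proof. by rewrite mixtureE !probability_setT !mule1 -EFinD subrK. Qed.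

HB.instance Definition _ := Measure_isProbability.Build _ _ _ mixture mixture_setT.

Lemma ge0_integral_mixture (D : set T) (f : T -> \bar R) : measurable D ->
  measurable_fun D f -> (forall x, D x -> 0 <= f x) ->
  \int[mixture]_(x in D) f x =
    (1 - l%:num)%:E * \int[P]_(x in D) f x + l%:num%:E * \int[Q]_(x in D) f x.
Proof.
by move=> mD mf f0; rewrite ge0_integral_measure_add// !ge0_integral_mscale.
Qed.

End mixture.

Section nonneg_reals.
Variable R : realType.
Local Notation T := (measurableTypeR R).
Local Open Scope ereal_scope.

Lemma measurable_ge (p : R) : measurable [set x : T | (p <= x)%R].
Proof.
rewrite (_ : [set _ | _] = [set` `[p, +oo[%R]); first exact: measurable_itv.
by apply/seteqP; split => x /=; rewrite in_itv/= andbT.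
Qed.

Lemma measurable_lt (p : R) : measurable [set x : T | (x < p)%R].
Proof.
rewrite (_ : [set _ | _] = [set` `]-oo, p[%R]); first exact: measurable_itv.
by apply/seteqP; split => x /=; rewrite in_itv.
Qed.

Lemma integral_nonneg_dist (P : rdist R) (f : T -> \bar R) : nonneg_dist P ->
  measurable_fun [set: T] f ->
  \int[P]_x f x = \int[P]_(x in [set x : T | (0 <= x)%R]) f x.
Proof.
move=> P0 mf; rewrite [RHS]integral_mkcond; apply: ae_eq_integral => //.
  apply/(measurable_restrictT _ _).1; first exact: measurable_ge.
  exact: measurable_funS mf.
exists [set x : T | (x < 0)%R]; split => //; first exact: measurable_lt.
move=> x /= nx; rewrite ltNge; apply/negP => x0.
by apply: nx => _; rewrite patchE mem_set.
Qed.

Lemma nonneg_dist_dirac (a : R) : (0 <= a)%R -> nonneg_dist (\d_(a : T) : rdist R).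
Proof.
move=> a0; rewrite /nonneg_dist /= /dirac indicE memNset//=.
by apply/negP; rewrite -leNgt.
Qed.

Lemma nonneg_dist_mixture (l : {i01 R}) (P Q : rdist R) :
  nonneg_dist P -> nonneg_dist Q -> nonneg_dist (mixture l P Q).
Proof. by rewrite /nonneg_dist /= mixtureE => -> ->; rewrite !mule0 adde0. Qed.

Lemma REVp_ge0 (p : R) (G : rdist R) : (0 <= p)%R -> 0 <= REVp p G.
Proof. by move=> p0; rewrite mule_ge0 ?lee_fin. Qed.

Lemma REVpE (p : R) (G : rdist R) :
  REVp p G = (p * fine (G [set x : T | (p <= x)%R]))%:E.
Proof. by rewrite /REVp EFinM fineK// fin_num_measure//; exact: measurable_ge. Qed.

Lemma measurable_REVp (G : rdist R) :
  measurable_fun [set: T] (fun p : T => REVp p G).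
Proof.
under eq_fun do rewrite REVpE.
apply/measurable_EFinP/measurable_funM => //.
apply: nonincreasing_measurable => // p q pq.
apply: fine_le; rewrite ?fin_num_measure//; try exact: measurable_ge.
apply: le_measure; rewrite ?inE; try exact: measurable_ge.
by move=> x /= qx; lra.
Qed.

Lemma REVp_le_OPT (p : R) (G : rdist R) : (0 <= p)%R -> REVp p G <= OPT G.
Proof. by move=> p0; apply: ereal_sup_ubound; exists p. Qed.

Lemma OPT_ge0 (G : rdist R) : 0 <= OPT G.
Proof. by apply: le_trans (REVp_le_OPT G (lexx 0%R)); exact: REVp_ge0. Qed.

Lemma REV_ge0 (A G : rdist R) : nonneg_dist A -> 0 <= REV A G.
Proof.
move=> A0; rewrite /REV (integral_nonneg_dist A0 (measurable_REVp G)).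
by apply: integral_ge0 => p; exact: REVp_ge0.
Qed.

Let measurable_EFin_id : measurable_fun [set: T] (fun x : T => x%:E).
Proof. exact/measurable_EFinP/measurable_id. Qed.

(* Revenue never exceeds welfare: this is Markov's inequality. *)
Lemma REVp_le_mean (F : rdist R) (m p : R) : nonneg_dist F -> has_mean F m ->
  (0 <= p)%R -> REVp p F <= m%:E.
Proof.
move=> F0 Fm p0.
rewrite -Fm (integral_nonneg_dist F0 measurable_EFin_id) /REVp.
set S := [set x : T | (p <= x)%R].
have mS : measurable S := measurable_ge p.
have S_ge0 : S `<=` [set x : T | (0 <= x)%R] by move=> x /=; exact: le_trans.
have mge0 := measurable_ge 0.
have m1S : measurable_fun [set x : T | (0 <= x)%R] (fun x => (\1_S x : R)%:E).
  by apply/measurable_EFinP; exact: measurable_indic.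
rewrite -(setIidl S_ge0) -integral_indic// -(ge0_integralZl_EFin F)//.
apply: ge0_le_integral => //.
- by move=> x _; rewrite -EFinM lee_fin mulr_ge0.
- exact/measurable_funeM.
- move=> x x0; rewrite -EFinM lee_fin indicE.
  by have [/set_mem Sx|_] := boolP (x \in S); rewrite ?mulr1 ?mulr0.
Qed.

Lemma has_mean_mixture (l : {i01 R}) (P Q : rdist R) (a b : R) :
  nonneg_dist P -> nonneg_dist Q -> has_mean P a -> has_mean Q b ->
  has_mean (mixture l P Q) ((1 - l%:num) * a + l%:num * b).
Proof.
move=> P0 Q0 Pa Qb; have mix0 := nonneg_dist_mixture l P0 Q0.
move: Pa Qb; rewrite /has_mean !(integral_nonneg_dist _ measurable_EFin_id)//.
rewrite ge0_integral_mixture//; last exact: measurable_ge.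
by move=> -> ->; rewrite -!EFinM -EFinD.
Qed.

Lemma var_about_mixture (l : {i01 R}) (P Q : rdist R) (m : R) :
  var_about (mixture l P Q) m =
    (1 - l%:num)%:E * var_about P m + l%:num%:E * var_about Q m.
Proof.
rewrite /var_about ge0_integral_mixture//; last by move=> x _; rewrite lee_fin sqr_ge0.
exact/measurable_EFinP/measurable_funX/measurable_funB.
Qed.

Lemma REVp_mixture (l : {i01 R}) (P Q : rdist R) (p : R) :
  REVp p (mixture l P Q) = (1 - l%:num)%:E * REVp p P + l%:num%:E * REVp p Q.
Proof.
by rewrite /REVp /= mixtureE ge0_muleDr ?mule_ge0 ?lee_fin// !(muleCA p%:E).
Qed.

Lemma REVp_mixture_ge (l : {i01 R}) (P Q : rdist R) (p : R) : (0 <= p)%R ->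
  (1 - l%:num)%:E * REVp p P <= REVp p (mixture l P Q).
Proof. by move=> p0; rewrite REVp_mixture leeDl// mule_ge0 ?lee_fin ?REVp_ge0. Qed.

Lemma REV_mixture_le (l : {i01 R}) (A P Q : rdist R) (m : R) :
  nonneg_dist A -> nonneg_dist Q -> has_mean Q m ->
  REV A (mixture l P Q) <= (1 - l%:num)%:E * REV A P + (l%:num * m)%:E.
Proof.
move=> A0 Q0 Qm; have m0 : 0 <= m%:E.
  exact: le_trans (REVp_ge0 Q (lexx 0)) (REVp_le_mean Q0 Qm (lexx 0)).
rewrite /REV !(integral_nonneg_dist A0 (measurable_REVp _)).
set D := [set x : T | (0 <= x)%R]; have mD : measurable D := measurable_ge 0.
have mREVp G : measurable_fun D (fun p : T => REVp p G).
  exact: measurable_funS (measurable_REVp G).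
apply: (@le_trans _ _
  (\int[A]_(p in D) ((1 - l%:num)%:E * REVp p P + (l%:num * m)%:E))).
  apply: ge0_le_integral => //.
  - by move=> p p0; exact: REVp_ge0.
  - exact/emeasurable_funD/measurable_cst/measurable_funeM.
  - move=> p p0; rewrite REVp_mixture leeD2l// EFinM lee_wpmul2l ?lee_fin//.
    exact: REVp_le_mean.
rewrite ge0_integralD//; first last.
- by move=> p _; rewrite EFinM mule_ge0 ?lee_fin.
- exact/measurable_funeM.
- by move=> p p0; rewrite mule_ge0 ?lee_fin ?REVp_ge0.
rewrite ge0_integralZl// ?lee_fin//; last by move=> p p0; exact: REVp_ge0.
rewrite leeD2l// integral_cst// -[leRHS]mule1 lee_wpmul2l ?probability_le1//.
by rewrite lee_fin mulr_ge0.
Qed.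

Lemma mass_above_half_mean_gt0 (F : rdist R) (m : R) : (0 < m)%R ->
  nonneg_dist F -> has_mean F m -> 0 < F [set x : T | (m / 2 <= x)%R].
Proof.
move=> m0 F0 Fm; rewrite lt0e measure_ge0 andbT; apply/eqP => F_null.
have mD := measurable_ge (0 : R).
suff : m%:E <= (m / 2)%:E by rewrite lee_fin; lra.
rewrite -Fm (integral_nonneg_dist F0 measurable_EFin_id).
apply: (@le_trans _ _ (\int[F]_(x in [set x : T | (0 <= x)%R]) (cst (m / 2)%:E) x)).
  apply: ae_ge0_le_integral => //.
  - by move=> x _; rewrite lee_fin divr_ge0// ltW.
  - exists [set x : T | (m / 2 <= x)%R]; split => //; first exact: measurable_ge.
    move=> x /= H; rewrite leNgt; apply/negP => xm.
    by apply: H => _; rewrite lee_fin ltW.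
rewrite integral_cst// -[leRHS]mule1 lee_wpmul2l ?probability_le1// lee_fin.
by rewrite divr_ge0// ltW.
Qed.

Lemma OPT_gt0 (F : rdist R) (m : R) :
  (0 < m)%R -> nonneg_dist F -> has_mean F m -> 0 < OPT F.
Proof.
move=> m0 F0 Fm; have m20 : (0 <= m / 2)%R by rewrite divr_ge0// ltW.
apply: lt_le_trans (REVp_le_OPT F m20).
by rewrite mule_gt0 ?lte_fin ?divr_gt0// mass_above_half_mean_gt0.
Qed.

Lemma has_mean_dirac (a : R) : has_mean (\d_(a : T) : rdist R) a.
Proof. by rewrite /has_mean integral_dirac//= diracT mul1e. Qed.

Lemma var_about_dirac (a m : R) :
  var_about (\d_(a : T) : rdist R) m = ((a - m) ^+ 2)%:E.
Proof.
rewrite /var_about integral_dirac//= ?diracT ?mul1e//.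
exact/measurable_EFinP/measurable_funX/measurable_funB.
Qed.

End nonneg_reals.

Section two_point.
Variable R : realType.
Local Notation T := (measurableTypeR R).
Variables (m : R) (t : {nonneg R}).

Let weight_ge0 : 0 <= (1 + t%:num)^-1.
Proof. by rewrite invr_ge0 addr_ge0. Qed.

Let weight_le1 : (1 + t%:num)^-1 <= 1.
Proof. by rewrite invf_le1 ?lerDl// ltr_pwDr. Qed.

(* Mass [t / (1 + t)] at [0] and [1 / (1 + t)] at [m (1 + t)], hence mean [m]
   and variance [m^2 t] about [m]. *)
Definition two_point : rdist R :=
  mixture (Itv01 weight_ge0 weight_le1) (\d_(0 : T)) (\d_(m * (1 + t%:num) : T)).

Lemma nonneg_dist_two_point : (0 <= m)%R -> nonneg_dist two_point.
Proof.
by move=> m0; apply: nonneg_dist_mixture; apply: nonneg_dist_dirac;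
  rewrite ?mulr_ge0 ?addr_ge0.
Qed.

Lemma has_mean_two_point : 0 <= m -> has_mean two_point m.
Proof.
move=> m0; have y0 : 0 <= m * (1 + t%:num) by rewrite mulr_ge0 ?addr_ge0.
have t1 : 1 + t%:num != 0 by rewrite gt_eqF// ltr_pwDl.
rewrite -[X in has_mean _ X](_ : (1 - (1 + t%:num)^-1) * 0
                                 + (1 + t%:num)^-1 * (m * (1 + t%:num)) = m).
  apply: (has_mean_mixture (Itv01 weight_ge0 weight_le1));
    by [exact: nonneg_dist_dirac | exact: has_mean_dirac].
by field.
Qed.

Lemma var_about_two_point : var_about two_point m = (m ^+ 2 * t%:num)%:E.
Proof.
rewrite var_about_mixture/= !var_about_dirac -!EFinM -EFinD; congr EFin.
by field; rewrite gt_eqF.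
Qed.

End two_point.

Section ratio.
Variable R : realType.
Local Open Scope ereal_scope.

Lemma lee_real_lt (x y : \bar R) : (forall r : R, r%:E < x -> r%:E <= y) -> x <= y.
Proof.
case: x => [x| |] h; last exact: leNye.
- by apply/lee_subgt0Pr => e e0; apply: h; rewrite lte_fin ltrBlDr ltrDl.
- by have -> : y = +oo by apply: eq_infty => r; apply: h; exact: ltry.
Qed.

Lemma ratio_ge0 (x y : \bar R) : 0 <= x -> 0 <= y -> 0 <= ratio x y.
Proof.
by move=> x0 y0; rewrite /ratio; case: ifP => // _; rewrite mule_ge0 ?inve_ge0.
Qed.

Lemma ratio_ge (x y : \bar R) (r w : R) : (0 <= r)%R -> 0 <= y -> y <= w%:E ->
  (r * w)%:E <= x -> r%:E <= ratio x y.
Proof.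
move=> r0 y0 yw rwx; rewrite /ratio; case: eqP => [_|/eqP yn0]; first exact: leey.
have /fineK yE : y \is a fin_num by rewrite ge0_fin_numE// (le_lt_trans yw) ?ltry.
have g0 : (0 < fine y)%R by rewrite fine_gt0// lt0e yn0 y0 (le_lt_trans yw) ?ltry.
rewrite -yE inver gt_eqF// lee_pdivlMr// -EFinM (le_trans _ rwx)// lee_fin.
by rewrite ler_wpM2l// -lee_fin yE.
Qed.

Lemma lt_ratio (x y : \bar R) (r : R) : (0 < r)%R -> 0 < x -> 0 <= y ->
  r%:E < ratio x y -> exists2 v : R, y = v%:E & (r * v)%:E < x.
Proof.
move=> r0 x0 y0; rewrite /ratio; case: eqP => [-> _|/eqP yn0].
  by exists 0%R; rewrite ?mulr0.
case: y y0 yn0 => [v| |]// v0 vn0.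
- have vp : (0 < v)%R by rewrite lt_neqAle eq_sym -eqe vn0 -lee_fin.
  by rewrite inver gt_eqF// lte_pdivlMr// => rvx; exists v; rewrite ?EFinM.
- by rewrite invey mule0 lte_fin ltNge ltW.
Qed.

End ratio.

Section F_le_F_eq.
Variables (R : realType) (mu sigma : R).
Hypothesis mu_gt0 : 0 < mu.
Local Open Scope ereal_scope.

Lemma F_eq_sub_F_le : F_eq mu sigma `<=` F_le mu sigma.
Proof. by move=> F [F0 [Fm Fv]]; do 2!split => //; rewrite Fv. Qed.

Lemma mixture_two_point_F_eq (l : {i01 R}) (F : rdist R) : (0 < l%:num)%R ->
  F_le mu sigma F ->
  exists t : {nonneg R}, F_eq mu sigma (mixture l F (two_point mu t)).
Proof.
move=> l0 [F0 [Fm Fv]].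
have var0 : 0 <= var_about F mu by apply: integral_ge0 => x _; rewrite lee_fin sqr_ge0.
have /fineK vE : var_about F mu \is a fin_num.
  by rewrite ge0_fin_numE// (le_lt_trans Fv) ?ltry.
set v := fine (var_about F mu) in vE.
have [v0 vs] : (0 <= v /\ v <= sigma ^+ 2)%R by rewrite -!lee_fin vE.
have t0 : (0 <= (sigma ^+ 2 - (1 - l%:num) * v) / (l%:num * mu ^+ 2))%R.
  rewrite divr_ge0 ?mulr_ge0 ?sqr_ge0 ?(ltW l0) ?(ltW mu_gt0)//.
  rewrite subr_ge0.
  by rewrite (le_trans _ vs)// ler_piMl// lerBlDr lerDl ltW.
exists (NngNum t0); split; [|split].
- exact/nonneg_dist_mixture/nonneg_dist_two_point/ltW.
- rewrite -[X in has_mean _ X](_ : (1 - l%:num) * mu + l%:num * mu = mu)%R; last by ring.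
  apply: has_mean_mixture => //;
    [exact/nonneg_dist_two_point/ltW | exact/has_mean_two_point/ltW].
- rewrite var_about_mixture -vE var_about_two_point -!EFinM -EFinD /=; congr EFin.
  by field; rewrite !gt_eqF.
Qed.

Lemma exists_F_eq_ratio_ge (A F : rdist R) (r : R) : nonneg_dist A ->
  F_le mu sigma F -> r%:E < ratio (OPT F) (REV A F) ->
  exists2 G, F_eq mu sigma G & r%:E <= ratio (OPT G) (REV A G).
Proof.
move=> A0 hF rF; have [F0 [Fm _]] := hF.
have [r0|r0] := leP r 0%R.
  have [t hG] := mixture_two_point_F_eq (l := 1%:i01%R) ltr01 hF.
  exists (mixture 1%:i01%R F (two_point mu t)) => //.
  apply: le_trans (ratio_ge0 (OPT_ge0 _) (REV_ge0 _ A0)).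
  by rewrite lee_fin.
have [v Fv rvO] := lt_ratio r0 (OPT_gt0 mu_gt0 F0 Fm) (REV_ge0 F A0) rF.
have [_ [p p0 <-] rvp] := ereal_sup_gt rvO.
have v0 : (0 <= v)%R by rewrite -lee_fin -Fv REV_ge0.
move: rvp; rewrite REVpE; set a := (p * _)%R => rva.
(* Chosen so that [r ((1 - eps) v + eps mu) = (1 - eps) a]. *)
pose eps := ((a - r * v) / (a - r * v + r * mu))%R.
have rmu : (0 < r * mu)%R by rewrite mulr_gt0.
have gap : (0 < a - r * v)%R by rewrite subr_gt0 -lte_fin.
have e0 : (0 < eps)%R by rewrite divr_gt0// addr_gt0.
have e1 : (eps <= 1)%R.
  by rewrite ler_pdivrMr; [rewrite mul1r lerDl ltW | rewrite addr_gt0].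
pose l : {i01 R} := Itv01 (ltW e0) e1.
have [t hG] := mixture_two_point_F_eq (l := l) e0 hF.
exists (mixture l F (two_point mu t)) => //.
apply: (ratio_ge (w := (1 - eps) * v + eps * mu)%R)
  (ltW r0) (REV_ge0 _ A0) _ _.
- rewrite EFinD EFinM -Fv; apply: REV_mixture_le => //.
  + exact/nonneg_dist_two_point/ltW.
  + exact/has_mean_two_point/ltW.
- have -> : (r * ((1 - eps) * v + eps * mu) = (1 - eps) * a)%R.
    by rewrite /eps; field; rewrite gt_eqF// addr_gt0.
  apply: le_trans (REVp_le_OPT _ p0); apply: le_trans (REVp_mixture_ge _ _ _ p0).
  by rewrite REVpE EFinM.
Qed.

Lemma worst_ratio_F_le_eq (A : rdist R) : nonneg_dist A ->
  worst_ratio (F_le mu sigma) A = worst_ratio (F_eq mu sigma) A.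
Proof.
move=> A0; apply/le_anti/andP; split; last first.
  exact/ereal_sup_le/image_subset/F_eq_sub_F_le.
apply: ge_ereal_sup => _ [F hF <-]; apply: lee_real_lt => r rF.
have [G hG rG] := exists_F_eq_ratio_ge A0 hF rF.
by apply: le_trans rG _; apply: ereal_sup_ubound; exists G.
Qed.

End F_le_F_eq.

Theorem lemma5 (R : realType) (mu sigma : R) (hmu : 0 < mu) (hsigma : 0 <= sigma) :
  (forall A : rdist R, nonneg_dist A ->
     worst_ratio (F_le mu sigma) A = worst_ratio (F_eq mu sigma) A) /\
  minimax_ratio (F_le mu sigma) = minimax_ratio (F_eq mu sigma).
Proof.
have worst_eq := worst_ratio_F_le_eq sigma hmu.
split=> //; rewrite /minimax_ratio; congr ereal_inf.
exact: eq_imagel.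
Qed.
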